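(* Let $N=\{1,\dots,n\}$, $n\ge2$, be a parallel-link network with unit demand and latency functions $\ell_i\in\mathcal{L}_c$. Suppose that $x_i(0)>0$ for all $i\in N$ (the untolled Wardrop equilibrium has full support). Let $c>0$ and $t\in\mathcal{T}(c)$. Then $x_i(t)>0$ and $t_i>0$ for all $i\in N$.
   Context: $\mathcal{L}_c$: strictly increasing, convex, continuously differentiable functions $\mathbb{R}_+\to\mathbb{R}_+$. Parallel links $N$, one unit of flow; flows $x\in\mathbb{R}^N_+$ with $\sum_ix_i=1$. For tolls $t\in\mathbb{R}^N_+$, $x(t)$ is the unique Wardrop equilibrium for $t$: for all $i,j$ with $x_i>0$, $\ell_i(x_i)+t_i\le \ell_j(x_j)+t_j$; $x(0)$ is the untolled Wardrop equilibrium. Profit of firm $i$: $\Pi_i(t)=t_ix_i(t)$. For $c\in\mathbb{R}_+$, $\mathcal{T}(c)$ is the set of $c$-capped subgame perfect Nash equilibria: toll vectors $t$ with $0\le t_i\le c$ for all $i$ such that for every $i$ and every $t'_i\in[0,c]$, $\Pi_i(t_i,t_{-i})\ge\Pi_i(t'_i,t_{-i})$ (flow recomputed as the Wardrop equilibrium). *)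

From Stdlib Require Import Reals Lra List Arith.
Open Scope R_scope.

Definition sumN (n : nat) (f : nat -> R) : R :=
  fold_right Rplus 0 (map f (seq 0 n)).

Definition C1_on_Rplus (l : R -> R) : Prop :=
  exists l' : R -> R,
    (forall x, 0 <= x ->
       limit1_in (fun h => (l (x + h) - l x) / h)
                 (fun h => h <> 0 /\ 0 <= x + h) (l' x) 0) /\
    (forall x, 0 <= x -> limit1_in l' (fun y => 0 <= y) (l' x) x).

Definition in_Lc (l : R -> R) : Prop :=
  (forall x, 0 <= x -> 0 <= l x) /\
  (forall x y, 0 <= x -> x < y -> l x < l y) /\
  (forall x y a, 0 <= x -> 0 <= y -> 0 <= a <= 1 ->
      l (a * x + (1 - a) * y) <= a * l x + (1 - a) * l y) /\
  C1_on_Rplus l.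

Definition is_wardrop (n : nat) (l : nat -> R -> R) (t : nat -> R)
    (x : nat -> R) : Prop :=
  (forall i, (i < n)%nat -> 0 <= x i) /\
  sumN n x = 1 /\
  (forall i j, (i < n)%nat -> (j < n)%nat -> 0 < x i ->
      l i (x i) + t i <= l j (x j) + t j).

Definition upd (t : nat -> R) (i : nat) (s : R) : nat -> R :=
  fun j => if Nat.eq_dec j i then s else t j.

(* t is a c-capped subgame perfect Nash equilibrium.  Profits are
   Pi_i(t) = t_i x_i(t) with x(t) the (unique) Wardrop equilibrium; this
   is expressed relationally over all Wardrop equilibria. *)
Definition in_T (n : nat) (l : nat -> R -> R) (c : R) (t : nat -> R) : Prop :=
  (forall i, (i < n)%nat -> 0 <= t i <= c) /\
  (forall i s x x', (i < n)%nat -> 0 <= s <= c ->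
      is_wardrop n l t x -> is_wardrop n l (upd t i s) x' ->
      t i * x i >= s * x' i).

(* A firm i that charges t_i = 0, or whose link carries no flow, earns nothing.
   It can always earn something by deviating to a small toll
   0 < s <= min(c, l_i(x_i(0)) - l_i(0)): since the other tolls are
   nonnegative, a Wardrop flow leaving link i empty would have to raise the
   flow, hence the latency, of some other link above its untolled value,
   while the cost of the empty link i stays below l_i(x_i(0)).  Hence
   t_i x_i(t) > 0 at a capped equilibrium.  Wardrop flows always exist: the
   flow that equalises all link costs at a level L is continuous in L, so by
   the intermediate value theorem some level routes exactly one unit. *)

From Stdlib Require Import Reals Lra List Arith Lia.
Open Scope R_scope.

Lemma fold_right_Rplus_init (s : list R) a :
  fold_right Rplus a s = fold_right Rplus 0 s + a.
Proof. induction s as [|b s IH]; simpl; [lra | rewrite IH; lra]. Qed.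

Lemma sumN_O f : sumN 0 f = 0.
Proof. reflexivity. Qed.

Lemma sumN_S n f : sumN (S n) f = sumN n f + f n.
Proof.
  unfold sumN. rewrite seq_S, map_app, fold_right_app. simpl.
  rewrite fold_right_Rplus_init. lra.
Qed.

Lemma sumN_ext n f g : (forall i, (i < n)%nat -> f i = g i) -> sumN n f = sumN n g.
Proof.
  induction n as [|n IH]; intros H; [reflexivity|].
  rewrite !sumN_S, IH, H; auto.
Qed.

Lemma sumN_const n a : sumN n (fun _ => a) = INR n * a.
Proof. induction n as [|n IH]; [rewrite sumN_O; simpl; ring|]. rewrite sumN_S, IH, S_INR. ring. Qed.

Lemma sumN_nonneg n f : (forall i, (i < n)%nat -> 0 <= f i) -> 0 <= sumN n f.
Proof.
  induction n as [|n IH]; intros H; [rewrite sumN_O; lra|]. rewrite sumN_S.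
  assert (0 <= sumN n f) by (apply IH; intros; apply H; lia).
  assert (0 <= f n) by (apply H; lia). lra.
Qed.

Lemma sumN_ge_term n f j :
  (forall i, (i < n)%nat -> 0 <= f i) -> (j < n)%nat -> f j <= sumN n f.
Proof.
  induction n as [|n IH]; intros H Hj; [lia|]. rewrite sumN_S.
  destruct (Nat.eq_dec j n) as [->|Hjn].
  - assert (0 <= sumN n f) by (apply sumN_nonneg; intros; apply H; lia). lra.
  - assert (f j <= sumN n f) by (apply IH; [intros; apply H|]; lia).
    assert (0 <= f n) by (apply H; lia). lra.
Qed.

Lemma sumN_ge_two_terms n f i j :
  (forall k, (k < n)%nat -> 0 <= f k) -> (i < n)%nat -> (j < n)%nat -> i <> j ->
  f i + f j <= sumN n f.
Proof.
  induction n as [|n IH]; intros H Hi Hj Hij; [lia|]. rewrite sumN_S.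
  destruct (Nat.eq_dec i n) as [->|Hin]; [|destruct (Nat.eq_dec j n) as [->|Hjn]].
  - assert (f j <= sumN n f) by (apply sumN_ge_term; [intros; apply H|]; lia). lra.
  - assert (f i <= sumN n f) by (apply sumN_ge_term; [intros; apply H|]; lia). lra.
  - assert (f i + f j <= sumN n f) by (apply IH; [intros; apply H| | |]; lia).
    assert (0 <= f n) by (apply H; lia). lra.
Qed.

Lemma sumN_lt_exists n a b :
  sumN n a < sumN n b -> exists j, (j < n)%nat /\ a j < b j.
Proof.
  induction n as [|n IH]; intros H; [rewrite !sumN_O in H; lra|]. rewrite !sumN_S in H.
  destruct (Rlt_le_dec (a n) (b n)).
  - exists n; split; [lia | lra].
  - destruct IH as [j [? ?]]; [lra|]. exists j; split; [lia | lra].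
Qed.

Lemma sumN_le_exists_other n a b i :
  sumN n a <= sumN n b -> (i < n)%nat -> b i < a i ->
  exists j, (j < n)%nat /\ j <> i /\ a j < b j.
Proof.
  induction n as [|n IH]; intros H Hi Hba; [lia|]. rewrite !sumN_S in H.
  destruct (Nat.eq_dec i n) as [->|Hin].
  - destruct (sumN_lt_exists n a b) as [j [? ?]]; [lra|].
    exists j; repeat split; [lia | lia | lra].
  - destruct (Rlt_le_dec (a n) (b n)).
    + exists n; repeat split; [lia | lia | lra].
    + destruct IH as [j [? [? ?]]]; [lra | lia | lra |].
      exists j; repeat split; [lia | auto | lra].
Qed.

Lemma sumN_continuity n (g : nat -> R -> R) :
  (forall i, (i < n)%nat -> continuity (g i)) ->
  continuity (fun L => sumN n (fun i => g i L)).
Proof.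
  induction n as [|n IH]; intros H L.
  - apply continuity_const. intros ? ?; reflexivity.
  - apply (continuity_pt_locally_ext (fun L => sumN n (fun i => g i L) + g n L)
             _ 1 L Rlt_0_1); [intros; symmetry; apply sumN_S|].
    apply continuity_pt_plus; [apply IH; intros; apply H; lia | apply H; lia].
Qed.

Definition increasing_on_Rplus (f : R -> R) : Prop :=
  forall x y, 0 <= x -> x < y -> f x < f y.

Definition continuous_on_Rplus (f : R -> R) : Prop :=
  forall x, 0 <= x -> limit1_in f (fun z => 0 <= z) (f x) x.

Lemma increasing_on_Rplus_le f : increasing_on_Rplus f ->
  forall x y, 0 <= x -> x <= y -> f x <= f y.
Proof.
  intros Hf x y Hx Hxy.
  destruct (Rle_lt_or_eq_dec x y Hxy) as [Hlt | ->]; [left; apply Hf | right]; auto.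
Qed.

Lemma C1_on_Rplus_continuous f : C1_on_Rplus f -> continuous_on_Rplus f.
Proof.
  intros [f' [Hdiff _]] x Hx eps Heps.
  (* f (x + h) - f x is the difference quotient times h, which tends to f' x * 0 *)
  assert (Hincr := limit_mul _ _ _ _ _ _ (Hdiff x Hx) (lim_x _ 0)).
  rewrite Rmult_0_r in Hincr.
  destruct (Hincr eps Heps) as [alp [Halp Hclose]].
  exists alp; split; [exact Halp|]. intros z [Hz Hzx]. simpl in *. unfold R_dist in *.
  destruct (Req_dec z x) as [->|Hzx_ne]; [rewrite Rminus_diag, Rabs_R0; lra|].
  specialize (Hclose (z - x)).
  replace (x + (z - x)) with z in Hclose by ring.
  replace ((f z - f x) / (z - x) * (z - x) - 0) with (f z - f x) in Hclose
    by (field; intro; apply Hzx_ne; lra).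
  apply Hclose. repeat split; [intro; apply Hzx_ne; lra | lra |].
  rewrite Rminus_0_r. exact Hzx.
Qed.

Lemma in_Lc_increasing l : in_Lc l -> increasing_on_Rplus l.
Proof. intros [_ [Hincr _]]. exact Hincr. Qed.

Lemma in_Lc_continuous l : in_Lc l -> continuous_on_Rplus l.
Proof. intros [_ [_ [_ HC1]]]. exact (C1_on_Rplus_continuous l HC1). Qed.

(* The flow [y] that a link of cost [f] carries when every used link costs
   [L]: the solution of [f y = L], clipped to [[0, 1]]. *)
Definition is_clipped_inverse (f : R -> R) (L y : R) : Prop :=
  0 <= y <= 1 /\ (0 < y -> f y <= L) /\ (y < 1 -> L <= f y).

Definition sublevel_in_unit (f : R -> R) (L z : R) : Prop :=
  z = 0 \/ (0 <= z <= 1 /\ f z <= L).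

Lemma sublevel_in_unit_bound f L : bound (sublevel_in_unit f L).
Proof. exists 1. intros z [->|[[? ?] ?]]; lra. Qed.

Lemma sublevel_in_unit_inhabited f L : exists z, sublevel_in_unit f L z.
Proof. exists 0. left; reflexivity. Qed.

Definition clipped_inverse (f : R -> R) (L : R) : R :=
  proj1_sig (completeness (sublevel_in_unit f L)
               (sublevel_in_unit_bound f L) (sublevel_in_unit_inhabited f L)).

Lemma clipped_inverse_spec f L :
  continuous_on_Rplus f -> is_clipped_inverse f L (clipped_inverse f L).
Proof.
  intros Hf. unfold clipped_inverse.
  destruct completeness as [m [Hub Hleast]]; simpl.
  assert (Hm0 : 0 <= m) by (apply Hub; left; reflexivity).
  assert (Hm1 : m <= 1) by (apply Hleast; intros z [->|[[? ?] ?]]; lra).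
  split; [lra | split]; intros Hm.
  - destruct (Rle_lt_dec (f m) L) as [|Hgt]; [assumption | exfalso].
    destruct (Hf m Hm0 (f m - L) ltac:(lra)) as [d [Hd Hnear]]; simpl in Hnear.
    (* near [m] from below, [f] stays above [L], so [m - d/2] is an upper bound *)
    assert (m <= Rmax (m - d / 2) 0); [|pose proof (Rmax_lub_lt (m - d / 2) 0 m ltac:(lra) Hm); lra].
    apply Hleast. intros z [->|[[? ?] Hz]]; [apply Rmax_r|].
    destruct (Rle_lt_dec z (Rmax (m - d / 2) 0)) as [|Hzm]; [assumption | exfalso].
    assert (z <= m) by (apply Hub; right; auto).
    pose proof (Rmax_l (m - d / 2) 0).
    assert (Hdist : R_dist (f z) (f m) < f m - L).
    { apply Hnear. split; [lra|]. unfold R_dist. apply Rabs_def1; lra. }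
    unfold R_dist in Hdist. apply Rabs_def2 in Hdist. lra.
  - destruct (Rle_lt_dec L (f m)) as [|Hlt]; [assumption | exfalso].
    destruct (Hf m Hm0 (L - f m) ltac:(lra)) as [d [Hd Hnear]]; simpl in Hnear.
    set (z := Rmin (m + d / 2) 1).
    assert (m < z) by (unfold z; apply Rmin_glb_lt; lra).
    assert (z <= m + d / 2) by apply Rmin_l. assert (z <= 1) by apply Rmin_r.
    assert (Hdist : R_dist (f z) (f m) < L - f m).
    { apply Hnear. split; [lra|]. unfold R_dist. apply Rabs_def1; lra. }
    unfold R_dist in Hdist. apply Rabs_def2 in Hdist.
    assert (z <= m); [apply Hub; right; repeat split; lra | lra].
Qed.

Section ClippedInverseContinuity.

Variable f : R -> R.
Hypothesis f_incr : increasing_on_Rplus f.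

Lemma clipped_inverse_below_f0 L y : is_clipped_inverse f L y -> L < f 0 -> y = 0.
Proof.
  intros [[Hy0 Hy1] [Hpos _]] HL.
  destruct (Rle_lt_or_eq_dec 0 y Hy0) as [Hy | <-]; [exfalso | reflexivity].
  assert (f 0 <= f y) by (apply increasing_on_Rplus_le; auto; lra).
  specialize (Hpos Hy). lra.
Qed.

Lemma clipped_inverse_above_f1 L y : is_clipped_inverse f L y -> f 1 < L -> y = 1.
Proof.
  intros [[Hy0 Hy1] [_ Hlt]] HL.
  destruct (Rle_lt_or_eq_dec y 1 Hy1) as [Hy | ->]; [exfalso | reflexivity].
  assert (f y <= f 1) by (apply increasing_on_Rplus_le; auto).
  specialize (Hlt Hy). lra.
Qed.

Variable p : R -> R.
Hypothesis p_spec : forall L, is_clipped_inverse f L (p L).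

Lemma clipped_inverse_upper_semicontinuous L0 eps : 0 < eps ->
  exists d, 0 < d /\ forall L, Rabs (L - L0) < d -> p L < p L0 + eps.
Proof.
  intros Heps. destruct (p_spec L0) as [[Hy0 Hy1] [_ Hlt]].
  destruct (Rlt_le_dec (p L0) 1) as [Hy | Hy].
  2: { exists 1. split; [lra|]. intros L _. destruct (p_spec L) as [[? ?] _]. lra. }
  set (q := Rmin (p L0 + eps / 2) 1).
  assert (p L0 < q) by (unfold q; apply Rmin_glb_lt; lra).
  assert (q <= p L0 + eps / 2) by apply Rmin_l.
  assert (f (p L0) < f q) by (apply f_incr; lra). specialize (Hlt Hy).
  exists (f q - L0). split; [lra|]. intros L HL. apply Rabs_def2 in HL.
  destruct (Rlt_le_dec (p L) q) as [|Hq]; [lra | exfalso].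
  destruct (p_spec L) as [_ [Hpos _]]. specialize (Hpos ltac:(lra)).
  assert (f q <= f (p L)) by (apply increasing_on_Rplus_le; auto; lra). lra.
Qed.

Lemma clipped_inverse_lower_semicontinuous L0 eps : 0 < eps ->
  exists d, 0 < d /\ forall L, Rabs (L - L0) < d -> p L0 - eps < p L.
Proof.
  intros Heps. destruct (p_spec L0) as [[Hy0 Hy1] [Hpos _]].
  destruct (Rlt_le_dec 0 (p L0)) as [Hy | Hy].
  2: { exists 1. split; [lra|]. intros L _. destruct (p_spec L) as [[? ?] _]. lra. }
  set (q := Rmax (p L0 - eps / 2) 0).
  assert (q < p L0) by (unfold q; apply Rmax_lub_lt; lra).
  assert (p L0 - eps / 2 <= q) by apply Rmax_l. assert (0 <= q) by apply Rmax_r.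
  assert (f q < f (p L0)) by (apply f_incr; lra). specialize (Hpos Hy).
  exists (L0 - f q). split; [lra|]. intros L HL. apply Rabs_def2 in HL.
  destruct (Rlt_le_dec q (p L)) as [|Hq]; [lra | exfalso].
  destruct (p_spec L) as [[? ?] [_ Hlt]]. specialize (Hlt ltac:(lra)).
  assert (f (p L) <= f q) by (apply increasing_on_Rplus_le; auto). lra.
Qed.

Lemma clipped_inverse_continuity : continuity p.
Proof.
  intros L0 eps Heps.
  destruct (clipped_inverse_upper_semicontinuous L0 eps Heps) as [d1 [Hd1 Hup]].
  destruct (clipped_inverse_lower_semicontinuous L0 eps Heps) as [d2 [Hd2 Hlow]].
  exists (Rmin d1 d2). split; [apply Rmin_pos; auto|].
  intros L [_ HL]. simpl in *. unfold R_dist in *.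
  pose proof (Rmin_l d1 d2). pose proof (Rmin_r d1 d2).
  specialize (Hup L ltac:(lra)). specialize (Hlow L ltac:(lra)).
  apply Rabs_def1; lra.
Qed.

End ClippedInverseContinuity.

Section CostEqualizingFlow.

Variables (n : nat) (f : nat -> R -> R).
Hypothesis n_pos : (0 < n)%nat.
Hypothesis f_cont : forall i, (i < n)%nat -> continuous_on_Rplus (f i).
Hypothesis f_incr : forall i, (i < n)%nat -> increasing_on_Rplus (f i).

Let flow (L : R) (i : nat) : R := clipped_inverse (f i) L.

Let flow_spec L i : (i < n)%nat -> is_clipped_inverse (f i) L (flow L i).
Proof. intros Hi. apply clipped_inverse_spec, f_cont, Hi. Qed.

Let flow_nonneg L i : (i < n)%nat -> 0 <= flow L i.
Proof. intros Hi. apply (flow_spec L i Hi). Qed.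

Lemma total_flow_continuity : continuity (fun L => sumN n (flow L)).
Proof.
  apply sumN_continuity. intros i Hi.
  apply (clipped_inverse_continuity (f i)); [apply f_incr, Hi|].
  intros L. apply flow_spec, Hi.
Qed.

Lemma total_flow_hits_one : exists L, sumN n (flow L) = 1.
Proof.
  set (low := - sumN n (fun i => Rabs (f i 0)) - 1).
  set (high := sumN n (fun i => Rabs (f i 1)) + 1).
  assert (Hlow : sumN n (flow low) = 0).
  { rewrite <- (Rmult_0_r (INR n)), <- sumN_const. apply sumN_ext. intros i Hi.
    apply (clipped_inverse_below_f0 (f i) (f_incr i Hi) low); [apply flow_spec, Hi|].
    assert (Rabs (f i 0) <= sumN n (fun i => Rabs (f i 0)))
      by (apply (sumN_ge_term n (fun i => Rabs (f i 0))); auto; intros; apply Rabs_pos).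
    pose proof (Rle_abs (- f i 0)) as Hneg; rewrite Rabs_Ropp in Hneg. unfold low. lra. }
  assert (Hhigh : sumN n (flow high) = INR n).
  { rewrite <- (Rmult_1_r (INR n)), <- sumN_const. apply sumN_ext. intros i Hi.
    apply (clipped_inverse_above_f1 (f i) (f_incr i Hi) high); [apply flow_spec, Hi|].
    assert (Rabs (f i 1) <= sumN n (fun i => Rabs (f i 1)))
      by (apply (sumN_ge_term n (fun i => Rabs (f i 1))); auto; intros; apply Rabs_pos).
    pose proof (Rle_abs (f i 1)). unfold high. lra. }
  assert (Hn : 1 <= INR n) by (apply (le_INR 1); lia).
  assert (Hlh : low <= high).
  { assert (0 <= sumN n (fun i => Rabs (f i 0))) by (apply sumN_nonneg; intros; apply Rabs_pos).
    assert (0 <= sumN n (fun i => Rabs (f i 1))) by (apply sumN_nonneg; intros; apply Rabs_pos).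
    unfold low, high. lra. }
  destruct (IVT_cor (fun L => sumN n (flow L) - 1) low high) as [L [_ HL]].
  - apply continuity_minus; [apply total_flow_continuity | apply continuity_const; now intros ? ?].
  - exact Hlh.
  - rewrite Hlow, Hhigh. nra.
  - exists L. lra.
Qed.

Lemma cost_equalizing_flow_exists : exists x : nat -> R,
  (forall i, (i < n)%nat -> 0 <= x i) /\ sumN n x = 1 /\
  (forall i j, (i < n)%nat -> (j < n)%nat -> 0 < x i -> f i (x i) <= f j (x j)).
Proof.
  destruct total_flow_hits_one as [L HL].
  exists (flow L). split; [|split]; [exact (flow_nonneg L) | exact HL|].
  intros i j Hi Hj Hxi.
  destruct (flow_spec L i Hi) as [_ [Hcost_i _]].
  destruct (flow_spec L j Hj) as [[_ Hxj1] [_ Hcost_j]].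
  specialize (Hcost_i Hxi).
  destruct (Rle_lt_or_eq_dec (flow L j) 1 Hxj1) as [Hxj | Hxj].
  - specialize (Hcost_j Hxj). lra.
  - (* a link carrying the whole unit leaves no flow for any other link *)
    destruct (Nat.eq_dec i j) as [->|Hij]; [lra | exfalso].
    assert (flow L i + flow L j <= sumN n (flow L))
      by (apply sumN_ge_two_terms; auto; intros; apply flow_nonneg; auto).
    lra.
Qed.

End CostEqualizingFlow.

Lemma wardrop_exists n l u : (0 < n)%nat -> (forall i, (i < n)%nat -> in_Lc (l i)) ->
  exists x, is_wardrop n l u x.
Proof.
  intros Hn Hl.
  apply (cost_equalizing_flow_exists n (fun i z => l i z + u i) Hn).
  - intros i Hi x Hx. apply limit_plus; [apply in_Lc_continuous; auto|].
    exact (limit_free (fun _ => u i) _ 0 x).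
  - intros i Hi x y Hx Hxy. pose proof (in_Lc_increasing _ (Hl i Hi) x y Hx Hxy). lra.
Qed.

Lemma wardrop_uses_link_with_small_toll n l x0 u i :
  (forall j, (j < n)%nat -> increasing_on_Rplus (l j)) ->
  is_wardrop n l (fun _ => 0) x0 -> (i < n)%nat -> 0 < x0 i ->
  (forall j, (j < n)%nat -> j <> i -> 0 <= u j) ->
  u i <= l i (x0 i) - l i 0 ->
  forall x, is_wardrop n l u x -> 0 < x i.
Proof.
  intros Hl [Hx0_nonneg [Hx0_sum Hx0_eq]] Hi Hx0i Hu Hui x [Hx_nonneg [Hx_sum Hx_eq]].
  destruct (Rle_lt_or_eq_dec 0 (x i) (Hx_nonneg i Hi)) as [|Hxi]; [assumption | exfalso].
  (* the flow removed from link i raises some other link j above its untolled flow *)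
  destruct (sumN_le_exists_other n x0 x i) as [j [Hj [Hji Hlt]]]; [lra | auto | lra |].
  assert (Hxj : 0 < x j) by (pose proof (Hx0_nonneg j Hj); lra).
  specialize (Hx_eq j i Hj Hi Hxj). rewrite <- Hxi in Hx_eq.
  specialize (Hx0_eq i j Hi Hj Hx0i).
  specialize (Hl j Hj (x0 j) (x j) (Hx0_nonneg j Hj) Hlt).
  specialize (Hu j Hj Hji). lra.
Qed.

Lemma capped_equilibrium_profit_pos n l c t i :
  (0 < n)%nat ->
  (forall j, (j < n)%nat -> in_Lc (l j)) ->
  (forall x0, is_wardrop n l (fun _ => 0) x0 -> 0 < x0 i) ->
  0 < c -> in_T n l c t -> (i < n)%nat ->
  forall x, is_wardrop n l t x -> 0 < t i * x i.
Proof.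
  intros Hn Hl Hfull Hc [Ht Hnash] Hi x Hx.
  destruct (wardrop_exists n l (fun _ => 0) Hn Hl) as [x0 Hx0].
  pose proof (Hfull x0 Hx0) as Hx0i.
  set (d := l i (x0 i) - l i 0).
  assert (Hd : 0 < d)
    by (pose proof (in_Lc_increasing _ (Hl i Hi) 0 (x0 i) (Rle_refl 0) Hx0i); unfold d; lra).
  set (s := Rmin c d).
  assert (Hs : 0 < s) by (apply Rmin_pos; auto).
  assert (Hsc : s <= c) by apply Rmin_l. assert (Hsd : s <= d) by apply Rmin_r.
  destruct (wardrop_exists n l (upd t i s) Hn Hl) as [x' Hx'].
  assert (Hx'i : 0 < x' i).
  { apply (wardrop_uses_link_with_small_toll n l x0 (upd t i s) i); auto.
    - intros j Hj. apply in_Lc_increasing, Hl, Hj.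
    - intros j Hj Hji. unfold upd. destruct Nat.eq_dec; [contradiction | apply Ht, Hj].
    - unfold upd. destruct Nat.eq_dec; [exact Hsd | contradiction]. }
  pose proof (Hnash i s x x' Hi ltac:(lra) Hx Hx'). nra.
Qed.

Theorem mainTheorem3 (n : nat) (l : nat -> R -> R) (c : R) (t : nat -> R) :
  (2 <= n)%nat ->
  (forall i, (i < n)%nat -> in_Lc (l i)) ->
  (forall x0, is_wardrop n l (fun _ => 0) x0 -> forall i, (i < n)%nat -> 0 < x0 i) ->
  0 < c ->
  in_T n l c t ->
  forall i, (i < n)%nat ->
    (forall x, is_wardrop n l t x -> 0 < x i) /\ 0 < t i.
Proof.
  intros Hn Hl Hfull Hc HT i Hi.
  assert (Hn0 : (0 < n)%nat) by lia.
  assert (Hprofit : forall x, is_wardrop n l t x -> 0 < t i * x i)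
    by (apply (capped_equilibrium_profit_pos n l c t i); auto; intros x0 Hx0; apply Hfull; auto).
  destruct HT as [Ht _]. destruct (Ht i Hi) as [Hti _].
  split.
  - intros x Hx. pose proof (Hprofit x Hx). destruct Hx as [Hx_nonneg _].
    pose proof (Hx_nonneg i Hi). nra.
  - destruct (wardrop_exists n l t Hn0 Hl) as [x Hx].
    pose proof (Hprofit x Hx). destruct Hx as [Hx_nonneg _].
    pose proof (Hx_nonneg i Hi). nra.
Qed.
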